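(* Let $D$ be a weak $\gamma$-LQG metric and $h$ a whole-plane GFF. For $q\in\mathbb Q^2$ let $P_q$ be the a.s. unique $D_h$-geodesic from $0$ to $q$. The following holds almost surely: if $q\in\mathbb Q^2$, $P'$ is any $D_h$-geodesic started from $0$, and $u\in P_q\cap P'$, then there is a time $s\ge0$ such that $P_q(s)=P'(s)=u$ and $P_q(t)=P'(t)$ for every $t\in[0,s]$.
   Context: A weak $\gamma$-LQG metric ($\gamma\in(0,2)$, with a constant $\xi>0$) is a measurable map $h\mapsto D_h$ from distributions on $\mathbb C$ to metrics on $\mathbb C$ inducing the Euclidean topology satisfying, for $h$ a whole-plane GFF plus a continuous function: length space property; locality (the internal metric of $D_h$ on a deterministic open $U$ is a.s. determined by $h|_U$); Weyl scaling $D_{h+f}=e^{\xi f}\cdot D_h$ for continuous $f$; translation invariance; and tightness across scales. A $D_h$-geodesic is a path of minimal $D_h$-length between its endpoints, parametrized by $D_h$-length (so a geodesic from $0$ hits a point $u$ at time $D_h(0,u)$). It is known (and may be used) that a.s. for every $q\in\mathbb Q^2$ there is exactly one $D_h$-geodesic from $0$ to $q$. *)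

From HB Require Import structures.
From mathcomp Require Import all_boot all_order all_algebra.
From mathcomp Require Import all_classical all_reals all_analysis.
Set Implicit Arguments. Unset Strict Implicit. Unset Printing Implicit Defensive.
Import Order.TTheory GRing.Theory Num.Theory.
Local Open Scope classical_set_scope.
Local Open Scope ring_scope.

(* The plane C is modelled as R * R. *)
Definition pt (R : realType) := (R * R)%type.

(* Euclidean-type distance (max norm; same topology as the Euclidean one). *)
Definition edist (R : realType) (x y : pt R) : R :=
  Num.max `|x.1 - y.1| `|x.2 - y.2|.

Definition origin (R : realType) : pt R := (0, 0).

Definition qpt (R : realType) (q : rat * rat) : pt R := (ratr q.1, ratr q.2).

Definition is_metric (R : realType) (d : pt R -> pt R -> R) : Prop :=
  (forall x y, 0 <= d x y) /\ (forall x y, d x y = 0 <-> x = y) /\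
  (forall x y, d x y = d y x) /\ (forall x y z, d x z <= d x y + d y z).

Definition induces_euclidean_topology (R : realType) (d : pt R -> pt R -> R) : Prop :=
  forall x : pt R,
    (forall e, 0 < e -> exists2 r, 0 < r & forall y, edist x y < r -> d x y < e) /\
    (forall e, 0 < e -> exists2 r, 0 < r & forall y, d x y < r -> edist x y < e).

(* P : R -> pt R is continuous on [a,b] (w.r.t. the Euclidean topology,
   equivalently the d-topology when d induces it). *)
Definition path_continuous_on (R : realType) (P : R -> pt R) (a b : R) : Prop :=
  forall t, a <= t <= b -> forall e, 0 < e ->
    exists2 r, 0 < r & forall s, a <= s <= b -> `|s - t| < r -> edist (P t) (P s) < e.

Definition path_length (R : realType) (d : pt R -> pt R -> R) (P : R -> pt R) (a b : R)
  : \bar R :=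
  ereal_sup [set l : \bar R | exists (n : nat) (t : nat -> R),
              [/\ t 0%N = a, t n = b, (forall i, (i < n)%N -> t i <= t i.+1) &
                  l = ((\sum_(i < n) d (P (t i)) (P (t i.+1)))%:E)%E]].

Definition path_from_to (R : realType) (P : R -> pt R) (T : R) (x y : pt R) : Prop :=
  0 <= T /\ P 0 = x /\ P T = y /\ path_continuous_on P 0 T.

Definition is_length_space (R : realType) (d : pt R -> pt R -> R) : Prop :=
  forall x y : pt R,
    (d x y)%:E = ereal_inf [set l : \bar R | exists (P : R -> pt R) (T : R),
                              path_from_to P T x y /\ l = path_length d P 0 T].

Definition is_geodesic (R : realType) (d : pt R -> pt R -> R) (P : R -> pt R) (T : R)
  (x y : pt R) : Prop :=
  path_from_to P T x y /\
  (forall (Q : R -> pt R) (S : R), path_from_to Q S x y ->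
      (path_length d P 0 T <= path_length d Q 0 S)%E) /\
  (forall t, 0 <= t <= T -> path_length d P 0 t = t%:E).

Definition is_geodesic_from0 (R : realType) (d : pt R -> pt R -> R) (P : R -> pt R) (T : R)
  : Prop := exists y, is_geodesic d P T (origin R) y.

(* exactly one geodesic from 0 to y (geodesics identified when they agree on
   their common parameter interval [0,T]) *)
Definition unique_geodesic_from0 (R : realType) (d : pt R -> pt R -> R) (y : pt R) : Prop :=
  (exists P T, is_geodesic d P T (origin R) y) /\
  forall P T P' T', is_geodesic d P T (origin R) y -> is_geodesic d P' T' (origin R) y ->
    T = T' /\ forall t, 0 <= t <= T -> P t = P' t.

(* A geodesic P from 0 satisfies D(0, P t) = t, so if the geodesics P_q and P'
   both pass through u they do so at the same time s = D(0, u).  Following P'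
   up to time s and P_q afterwards gives a path of the same length as P_q from
   0 to q, hence another geodesic from 0 to q; by uniqueness it is P_q, so P_q
   and P' agree on [0, s]. *)
From HB Require Import structures.
From mathcomp Require Import all_boot all_order all_algebra.
From mathcomp Require Import all_classical all_reals all_analysis.
From mathcomp Require Import lra.
Set Implicit Arguments.
Unset Strict Implicit.
Unset Printing Implicit Defensive.
Import Order.TTheory GRing.Theory Num.Theory.
Local Open Scope classical_set_scope.
Local Open Scope ring_scope.

Section PathLength.
Variables (R : realType) (d : pt R -> pt R -> R).

Definition lipschitz1_on (P : R -> pt R) (a b : R) : Prop :=
  forall s t, a <= s -> s <= t -> t <= b -> d (P s) (P t) <= t - s.

Lemma lipschitz1_on_sub (P : R -> pt R) a b a' b' :
  a <= a' -> b' <= b -> lipschitz1_on P a b -> lipschitz1_on P a' b'.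
Proof.
by move=> aa' b'b lipP s t a's st tb'; apply: lipP (le_trans aa' a's) st (le_trans tb' b'b).
Qed.

Lemma partition_nondecreasing {t : nat -> R} {n : nat} :
  (forall i, (i < n)%N -> t i <= t i.+1) ->
  forall i j, (i <= j)%N -> (j <= n)%N -> t i <= t j.
Proof.
move=> t_incr i; elim=> [|j IH] ij jn; first by move: ij; rewrite leqn0 => /eqP ->.
case: (ltngtP i j.+1) ij => // [ij|->] _ //.
exact: le_trans (IH ij (ltnW jn)) (t_incr _ jn).
Qed.

Lemma path_length_ge_sum (P : R -> pt R) a b n (t : nat -> R) :
  t 0%N = a -> t n = b -> (forall i, (i < n)%N -> t i <= t i.+1) ->
  ((\sum_(i < n) d (P (t i)) (P (t i.+1)))%:E <= path_length d P a b)%E.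
Proof. by move=> t0 tn t_incr; apply: ereal_sup_ubound; exists n, t. Qed.

Lemma path_length_ge_dist (P : R -> pt R) a b :
  a <= b -> ((d (P a) (P b))%:E <= path_length d P a b)%E.
Proof.
move=> ab; have := @path_length_ge_sum P a b 1 (fun i => if i == 0%N then a else b).
by rewrite big_ord1; apply=> // i; rewrite ltnS leqn0 => /eqP ->.
Qed.

Lemma path_length_le (P : R -> pt R) a b (M : R) :
  (forall n (t : nat -> R), t 0%N = a -> t n = b ->
     (forall i, (i < n)%N -> t i <= t i.+1) ->
     \sum_(i < n) d (P (t i)) (P (t i.+1)) <= M) ->
  (path_length d P a b <= M%:E)%E.
Proof.
by move=> bound; apply: ge_ereal_sup => _ [n [t [t0 tn t_incr ->]]]; rewrite lee_fin bound.
Qed.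

(* A partition of [a, m] extended by the point b is a partition of [a, b]. *)
Lemma path_length_le_sub_dist (P : R -> pt R) a m b (M : R) :
  m <= b -> (path_length d P a b <= M%:E)%E ->
  (path_length d P a m <= (M - d (P m) (P b))%:E)%E.
Proof.
move=> mb lenM; apply: path_length_le => n t t0 tn t_incr.
rewrite lerBrDr -lee_fin; apply: le_trans lenM.
pose t' i := if (i <= n)%N then t i else b.
have := @path_length_ge_sum P a b n.+1 t'.
rewrite /t' leq0n t0 ltnn big_ord_recr /= leqnn ltnn tn.
rewrite (eq_bigr (fun i : 'I_n => d (P (t i)) (P (t i.+1)))); last first.
  by move=> i _; rewrite ltn_ord ltnW.
apply=> // i; rewrite ltnS => ilen; rewrite ilen.
case: (ltnP i n) => [/t_incr //|nlei].
have -> : i = n by apply/eqP; rewrite eqn_leq ilen.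
by rewrite tn.
Qed.

Lemma lipschitz1_path_length_le (P : R -> pt R) a b :
  lipschitz1_on P a b -> a <= b -> (path_length d P a b <= (b - a)%:E)%E.
Proof.
move=> lipP ab; apply: path_length_le => n t t0 tn t_incr.
have t_in i : (i <= n)%N -> a <= t i <= b.
  move=> ilen; rewrite -t0 -tn.
  by rewrite !(partition_nondecreasing t_incr) ?leq0n.
apply: le_trans (_ : \sum_(i < n) (t i.+1 - t i) <= _).
  apply: ler_sum => i _; have /andP[ai _] := t_in i (ltnW (ltn_ord i)).
  have /andP[_ ib] := t_in i.+1 (ltn_ord i).
  exact: lipP (t_incr i (ltn_ord i)) ib.
by rewrite -(big_mkord xpredT (fun i => t i.+1 - t i)) telescope_sumr // tn t0.
Qed.

Lemma unit_speed_path_length (P : R -> pt R) T :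
  lipschitz1_on P 0 T -> (forall t, 0 <= t <= T -> d (P 0) (P t) = t) ->
  forall t, 0 <= t <= T -> path_length d P 0 t = t%:E.
Proof.
move=> lipP distP t /andP[t0 tT]; apply/le_anti/andP; split.
  rewrite -[t in t%:E]subr0; apply: lipschitz1_path_length_le t0.
  exact: lipschitz1_on_sub lipP.
by rewrite -{1}(distP t) ?t0 ?tT //; apply: path_length_ge_dist.
Qed.

Lemma lipschitz1_path_continuous (P : R -> pt R) a b :
  induces_euclidean_topology d -> is_metric d -> lipschitz1_on P a b ->
  path_continuous_on P a b.
Proof.
move=> d_top [_ [_ [d_sym _]]] lipP t /andP[a_t t_b] e e0.
have [r r0 close] := (d_top (P t)).2 e e0.
exists r => // s /andP[a_s s_b] st; apply: close; apply: le_lt_trans st.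
have [ts|st'] := lerP t s.
  exact: lipP.
by rewrite d_sym; apply: lipP (ltW st') t_b.
Qed.

End PathLength.

Section Geodesic.
Variables (R : realType) (d : pt R -> pt R -> R).
Hypotheses (d_metric : is_metric d) (d_length : is_length_space d).
Variables (P : R -> pt R) (T : R) (x y : pt R).
Hypothesis geoP : is_geodesic d P T x y.

Lemma geodesic_time_le_dist : T <= d x y.
Proof.
have [[T0 _] [minP speedP]] := geoP.
rewrite -lee_fin d_length; apply: le_ereal_inf_tmp => _ [Q [S [pathQ ->]]].
by rewrite -(speedP T) ?T0 ?lexx //; apply: minP.
Qed.

Lemma geodesic_dist_start t : 0 <= t <= T -> d x (P t) = t.
Proof.
have [_ [_ [_ d_tri]]] := d_metric.
have [[T0 [P0 [PT _]]] [_ speedP]] := geoP.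
move=> /andP[t0 tT]; apply/le_anti/andP; split.
  by have := path_length_ge_dist d P t0; rewrite speedP ?t0 ?tT // lee_fin P0.
have lenT : (path_length d P 0 T <= T%:E)%E by rewrite speedP ?T0 ?lexx.
have := path_length_le_sub_dist tT lenT; rewrite speedP ?t0 ?tT // lee_fin PT.
have := d_tri x (P t) y; have := geodesic_time_le_dist; lra.
Qed.

Lemma geodesic_lipschitz1 : lipschitz1_on d P 0 T.
Proof.
have [[_ [P0 _]] [_ speedP]] := geoP.
move=> s t s0 st tT; have t0 := le_trans s0 st.
pose u i := match i with 0%N => 0 | 1%N => s | _ => t end.
have u_incr i : (i < 2)%N -> u i <= u i.+1 by case: i => [|[|]].
have := path_length_ge_sum d P (erefl : u 0%N = 0) (erefl : u 2%N = t) u_incr.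
rewrite big_ord_recr big_ord1 /= speedP ?t0 ?tT // lee_fin P0.
rewrite geodesic_dist_start ?s0 ?(le_trans st tT) //; lra.
Qed.

End Geodesic.

Definition glue (R : realType) (P1 P2 : R -> pt R) (s : R) (t : R) : pt R :=
  if t <= s then P1 t else P2 t.

Lemma lipschitz1_glue (R : realType) (d : pt R -> pt R -> R) (P1 P2 : R -> pt R) a s b :
  is_metric d -> lipschitz1_on d P1 a s -> lipschitz1_on d P2 s b -> P1 s = P2 s ->
  lipschitz1_on d (glue P1 P2 s) a b.
Proof.
move=> [_ [_ [_ d_tri]]] lip1 lip2 P12 r t ar rt tb; rewrite /glue.
case: (lerP r s) => rs; case: (lerP t s) => ts.
- exact: lip1.
- have := d_tri (P1 r) (P1 s) (P2 t).
  have := lip1 _ _ ar rs (lexx s); have := lip2 _ _ (lexx s) (ltW ts) tb; rewrite -P12; lra.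
- by move: rs rt ts; lra.
- exact: lip2 (ltW rs) rt tb.
Qed.

Section Glue.
Variables (R : realType) (d : pt R -> pt R -> R).
Hypotheses (d_metric : is_metric d) (d_top : induces_euclidean_topology d)
  (d_length : is_length_space d).

Lemma glue_geodesic (P1 P2 : R -> pt R) T1 T2 x z y s :
  is_geodesic d P1 T1 x z -> is_geodesic d P2 T2 x y ->
  0 <= s -> s <= T1 -> s <= T2 -> P1 s = P2 s ->
  is_geodesic d (glue P1 P2 s) T2 x y.
Proof.
move=> geo1 geo2 s0 sT1 sT2 P12.
have [[T20 [_ [P2T2 _]]] [min2 speed2]] := geo2.
have lipQ : lipschitz1_on d (glue P1 P2 s) 0 T2.
  apply: lipschitz1_glue P12 => //.
  - exact: lipschitz1_on_sub (lexx 0) sT1 (geodesic_lipschitz1 d_metric d_length geo1).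
  - exact: lipschitz1_on_sub s0 (lexx T2) (geodesic_lipschitz1 d_metric d_length geo2).
have Q0 : glue P1 P2 s 0 = x by rewrite /glue s0; have [[_ []]] := geo1.
have speedQ : forall t, 0 <= t <= T2 -> path_length d (glue P1 P2 s) 0 t = t%:E.
  apply: unit_speed_path_length => // t /andP[t0 tT2]; rewrite Q0 /glue.
  case: ifP => [ts|_]; last by rewrite (geodesic_dist_start d_metric d_length geo2) ?t0.
  by rewrite (geodesic_dist_start d_metric d_length geo1) ?t0 ?(le_trans ts sT1).
split; [split=> //; split=> //; split|split=> //].
- rewrite /glue; case: lerP => // T2s.
  have eT2 : T2 = s by apply/eqP; rewrite eq_le T2s sT2.
  by rewrite -P2T2 eT2.
- exact: lipschitz1_path_continuous.
- move=> Q S pathQ; rewrite speedQ ?T20 ?lexx // -(speed2 T2) ?T20 ?lexx //.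
  exact: min2.
Qed.

End Glue.

Theorem mainTheorem5 (R : realType) (dsp : measure_display) (Omega : measurableType dsp)
  (Pr : probability Omega R) (D : Omega -> pt R -> pt R -> R)
  (Dmetric : forall w, is_metric (D w))
  (Dtop : forall w, induces_euclidean_topology (D w))
  (Dlength : forall w, is_length_space (D w))
  (Duniq : {ae Pr, forall w, forall q : rat * rat, unique_geodesic_from0 (D w) (qpt R q)}) :
  {ae Pr, forall w,
    forall (q : rat * rat) (Pq : R -> pt R) (Tq : R),
      is_geodesic (D w) Pq Tq (origin R) (qpt R q) ->
    forall (P' : R -> pt R) (T' : R), is_geodesic_from0 (D w) P' T' ->
    forall (u : pt R) (a b : R), 0 <= a <= Tq -> Pq a = u -> 0 <= b <= T' -> P' b = u ->
    exists s : R, [/\ 0 <= s /\ s <= Tq, s <= T', Pq s = u, P' s = u &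
                      forall t, 0 <= t <= s -> Pq t = P' t]}.
Proof.
apply: filterS Duniq => w uniq_geo q Pq Tq geoq P' T' [y geo'] u a b.
move=> /andP[a0 aTq] Pqa /andP[b0 bT'] P'b.
have a_eq_b : a = b.
  have := geodesic_dist_start (Dmetric w) (Dlength w) geoq (t := a).
  have := geodesic_dist_start (Dmetric w) (Dlength w) geo' (t := b).
  by rewrite a0 aTq b0 bT' Pqa P'b => <- // <-.
move: bT' P'b; rewrite -a_eq_b => aT' P'a.
have geo_glue := glue_geodesic (Dmetric w) (Dtop w) (Dlength w) geo' geoq a0 aT' aTq.
have [_ agree] := (uniq_geo q).2 _ _ _ _ (geo_glue (etrans P'a (esym Pqa))) geoq.
exists a; split => // t /andP[t0 ta].
by rewrite -agree ?t0 ?(le_trans ta aTq) // /glue ta.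
Qed.
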